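(* Fix $k\ge0$. Let $\mathcal G$ be a discrete groupoid acting self-similarly on a locally convex $(k+1)$-graph $\Lambda$, and let $\Gamma=d^{-1}(\mathbb N^k\times\{0\})$. Then every finite subset $F\subseteq v(\Gamma\bowtie\mathcal G)$ ($v\in\Lambda^0$) that is exhaustive in $\Gamma\bowtie\mathcal G$ is exhaustive in $\Lambda\bowtie\mathcal G$.
   Context: A $(k+1)$-graph is a countable small category $\Lambda$ with a functor $d:\Lambda\to\mathbb N^{k+1}$ with unique factorisation (whenever $d(\lambda)=m+n$ there are unique $\mu,\nu$ with $\lambda=\mu\nu$, $d(\mu)=m$, $d(\nu)=n$); $\Lambda^n=d^{-1}(n)$. Locally convex: for $i\ne j$, if $e\in\Lambda^{e_i}$ and $r(e)\Lambda^{e_j}\ne\emptyset$ then $s(e)\Lambda^{e_j}\ne\emptyset$. A self-similar action of a discrete groupoid $\mathcal G$ ($\mathcal G^0=\Lambda^0$) on $\Lambda$: left action $g\triangleright\lambda\in\Lambda$, right action $g\triangleleft\lambda\in\mathcal G$ (for $s(g)=r(\lambda)$) with $s(g\triangleright\lambda)=r(g\triangleleft\lambda)$, $g\triangleright(\lambda\mu)=(g\triangleright\lambda)((g\triangleleft\lambda)\triangleright\mu)$, $(gh)\triangleleft\lambda=(g\triangleleft(h\triangleright\lambda))(h\triangleleft\lambda)$, $d(g\triangleright\lambda)=d(\lambda)$. $\Lambda\bowtie\mathcal G$ has morphisms $\lambda g$ ($s(\lambda)=r(g)$), product $\lambda g\mu h=\lambda(g\triangleright\mu)(g\triangleleft\mu)h$;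 $\Gamma\bowtie\mathcal G$ is a subcategory. For a category $\mathcal C$ and $v\in\mathcal C^0$, $F\subseteq v\mathcal C$ is exhaustive in $\mathcal C$ if for every $c\in v\mathcal C$ there is $a\in F$ with $c\mathcal C\cap a\mathcal C\ne\emptyset$. *)

From Stdlib Require List.
From mathcomp Require Import all_boot.
Set Implicit Arguments. Unset Strict Implicit. Unset Printing Implicit Defensive.

(** Composition [comp a b] is "a then-after b" (= ab in the paper), meaningful
    when [s a = r b]. *)
Record kgraph (n : nat) := KGraph {
  Obj  : Type;
  Mor  : countType;
  r    : Mor -> Obj;
  s    : Mor -> Obj;
  idm  : Obj -> Mor;
  comp : Mor -> Mor -> Mor;
  deg  : Mor -> 'I_n -> nat
}.
Arguments r {n L} : rename.
Arguments s {n L} : rename.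
Arguments idm {n L} : rename.
Arguments comp {n L} : rename.
Arguments deg {n L} : rename.

Definition is_kgraph (n : nat) (L : kgraph n) : Prop :=
  (forall v : Obj L, r (idm v) = v /\ s (idm v) = v) /\
  (forall a b : Mor L, s a = r b -> r (comp a b) = r a /\ s (comp a b) = s b) /\
  (forall a : Mor L, comp (idm (r a)) a = a /\ comp a (idm (s a)) = a) /\
  (forall a b c : Mor L, s a = r b -> s b = r c ->
      comp (comp a b) c = comp a (comp b c)) /\
  (forall (v : Obj L) i, deg (idm v) i = 0) /\
  (forall a b : Mor L, s a = r b -> forall i, deg (comp a b) i = deg a i + deg b i) /\
  (forall (l : Mor L) (m p : 'I_n -> nat), (forall i, deg l i = m i + p i) ->
     (exists mu nu : Mor L, s mu = r nu /\ l = comp mu nu /\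
        (forall i, deg mu i = m i) /\ (forall i, deg nu i = p i)) /\
     (forall mu nu mu' nu' : Mor L,
        s mu = r nu -> l = comp mu nu -> (forall i, deg mu i = m i) -> (forall i, deg nu i = p i) ->
        s mu' = r nu' -> l = comp mu' nu' -> (forall i, deg mu' i = m i) -> (forall i, deg nu' i = p i) ->
        mu = mu' /\ nu = nu')).

Definition deg_is_unit (n : nat) (L : kgraph n) (l : Mor L) (i : 'I_n) : Prop :=
  forall j, deg l j = (j == i).

Definition locally_convex (n : nat) (L : kgraph n) : Prop :=
  forall (i j : 'I_n), i != j -> forall e : Mor L, deg_is_unit e i ->
    (exists f : Mor L, r f = r e /\ deg_is_unit f j) ->
    (exists f : Mor L, r f = s e /\ deg_is_unit f j).

Record groupoid (O : Type) := Groupoid {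
  GMor : Type;
  gr   : GMor -> O;
  gs   : GMor -> O;
  gid  : O -> GMor;
  gmul : GMor -> GMor -> GMor;   (* gmul g h = gh, meaningful when gs g = gr h *)
  ginv : GMor -> GMor
}.
Arguments gr {O G} : rename.
Arguments gs {O G} : rename.
Arguments gid {O G} : rename.
Arguments gmul {O G} : rename.
Arguments ginv {O G} : rename.

Definition is_groupoid (O : Type) (G : groupoid O) : Prop :=
  (forall v : O, gr (@gid _ G v) = v /\ gs (@gid _ G v) = v) /\
  (forall g h : GMor G, gs g = gr h -> gr (gmul g h) = gr g /\ gs (gmul g h) = gs h) /\
  (forall g : GMor G, gmul (gid (gr g)) g = g /\ gmul g (gid (gs g)) = g) /\
  (forall g h l : GMor G, gs g = gr h -> gs h = gr l ->
      gmul (gmul g h) l = gmul g (gmul h l)) /\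
  (forall g : GMor G, gr (ginv g) = gs g /\ gs (ginv g) = gr g /\
      gmul g (ginv g) = gid (gr g) /\ gmul (ginv g) g = gid (gs g)).

Record ss_action (n : nat) (L : kgraph n) (G : groupoid (Obj L)) := SSAction {
  act : GMor G -> Mor L -> Mor L;    (* g |> l, meaningful when gs g = r l *)
  res : GMor G -> Mor L -> GMor G    (* g <| l, meaningful when gs g = r l *)
}.
Arguments act {n L G} : rename.
Arguments res {n L G} : rename.

Definition is_self_similar (n : nat) (L : kgraph n) (G : groupoid (Obj L))
    (A : @ss_action n L G) : Prop :=
  (forall g l, gs g = r l -> r (act A g l) = gr g) /\
  (forall l, act A (gid (r l)) l = l) /\
  (forall g h l, gs g = gr h -> gs h = r l -> act A (gmul g h) l = act A g (act A h l)) /\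
  (forall g l, gs g = r l -> forall i, deg (act A g l) i = deg l i) /\
  (forall g l, gs g = r l -> gr (res A g l) = s (act A g l) /\ gs (res A g l) = s l) /\
  (forall g, res A g (idm (gs g)) = g) /\
  (forall g l mu, gs g = r l -> s l = r mu ->
      act A g (comp l mu) = comp (act A g l) (act A (res A g l) mu)) /\
  (forall g l mu, gs g = r l -> s l = r mu ->
      res A g (comp l mu) = res A (res A g l) mu) /\
  (forall g h l, gs g = gr h -> gs h = r l ->
      res A (gmul g h) l = gmul (res A g (act A h l)) (res A h l)).

(** Morphisms are pairs [(l, g)] with [s l = gr g]; range [r l], source [gs g].
    A subcategory is given by a predicate [P] on the Λ-component. *)
Section ZS.
Variables (n : nat) (L : kgraph n) (G : groupoid (Obj L)) (A : @ss_action n L G).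

Definition zs_mor (P : Mor L -> Prop) (x : Mor L * GMor G) : Prop :=
  P x.1 /\ s x.1 = gr x.2.
Definition zs_r (x : Mor L * GMor G) : Obj L := r x.1.
Definition zs_s (x : Mor L * GMor G) : Obj L := gs x.2.
Definition zs_mul (x y : Mor L * GMor G) : Mor L * GMor G :=
  (comp x.1 (act A x.2 y.1), gmul (res A x.2 y.1) y.2).

Definition exhaustive (P : Mor L -> Prop) (v : Obj L) (F : seq (Mor L * GMor G)) : Prop :=
  (forall a, List.In a F -> zs_mor P a /\ zs_r a = v) /\
  (forall c, zs_mor P c -> zs_r c = v ->
     exists a, List.In a F /\
       exists c' a', zs_mor P c' /\ zs_mor P a' /\
         zs_s c = zs_r c' /\ zs_s a = zs_r a' /\ zs_mul c c' = zs_mul a a').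
End ZS.

Definition in_Gamma (k : nat) (L : kgraph k.+1) (l : Mor L) : Prop :=
  deg l ord_max = 0.
Definition in_Lambda (n : nat) (L : kgraph n) (l : Mor L) : Prop := True.

From Pilot Require Import Defs.
From mathcomp Require Import all_boot zify.
From Stdlib Require Import Classical.

Set Implicit Arguments. Unset Strict Implicit.

(* Given [(lam, g)] in [v(Λ ⋈ G)], extend [lam] by some [tau] so that [lam tau = mu nu]
   with [mu ∈ Γ] and [nu] a path of pure last-coordinate degree, and grow [mu] in the
   Γ-directions until it is saturated: in each direction [i] it either has degree at
   least a bound [N] for the degrees of the elements of [F], or [s mu] receives no
   [i]-edge.  Local convexity transports an [i]-edge at [s mu] along [nu], so the
   growth can continue as long as [mu] is not saturated.  Exhaustiveness of [F] in
   [Γ ⋈ G] applied to [(mu, 1)] yields [(al, h) ∈ F] with [mu ga = al be]; saturation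
   forces [d(al) <= d(mu)], so [al] is a prefix of [mu] and hence of [lam tau], and
   the groupoid components are absorbed using the self-similar action. *)

Local Notation comp := Defs.comp.

Lemma ltn_sum_subn_incr (I : finType) (f g : I -> nat) (i : I) (N : nat) :
  (forall l, g l = f l + (l == i)) -> f i < N ->
  \sum_l (N - g l) < \sum_l (N - f l).
Proof.
move=> Hg Hi; rewrite (bigD1 i) //= [X in _ < X](bigD1 i) //= Hg eqxx.
rewrite (eq_bigr (fun l => N - f l)) => [|l /negbTE Hl]; last by rewrite Hg Hl addn0.
rewrite ltn_add2r; lia.
Qed.

Lemma deg_bounded_seq (n : nat) (L : kgraph n) (X : Type) (F : seq (Mor L * X)) :
  exists N, forall a, List.In a F -> forall i, deg a.1 i <= N.
Proof.
elim: F => [|x F [N HN]]; first by exists 0.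
exists (\sum_(j < n) deg x.1 j + N) => a [<-|Ha] i.
  by rewrite (bigD1 i) //= -addnA leq_addr.
by apply: leq_trans (HN a Ha i) _; rewrite leq_addl.
Qed.

Section KGraph.
Variables (n : nat) (L : kgraph n).
Hypothesis HL : is_kgraph L.

Lemma r_idm (v : Obj L) : r (idm v) = v.
Proof. by case: HL => H _; case: (H v). Qed.

Lemma s_idm (v : Obj L) : s (idm v) = v.
Proof. by case: HL => H _; case: (H v). Qed.

Lemma r_comp (a b : Mor L) : s a = r b -> r (comp a b) = r a.
Proof. by case: HL => _ [H _] /H []. Qed.

Lemma s_comp (a b : Mor L) : s a = r b -> s (comp a b) = s b.
Proof. by case: HL => _ [H _] /H []. Qed.

Lemma idm_comp (a : Mor L) : comp (idm (r a)) a = a.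
Proof. by case: HL => _ [_ [H _]]; case: (H a). Qed.

Lemma comp_idm (a : Mor L) : comp a (idm (s a)) = a.
Proof. by case: HL => _ [_ [H _]]; case: (H a). Qed.

Lemma compA (a b c : Mor L) : s a = r b -> s b = r c ->
  comp (comp a b) c = comp a (comp b c).
Proof. by case: HL => _ [_ [_ [H _]]]; apply: H. Qed.

Lemma deg_idm (v : Obj L) i : deg (idm v) i = 0.
Proof. by case: HL => _ [_ [_ [_ [H _]]]]. Qed.

Lemma deg_comp (a b : Mor L) i : s a = r b -> deg (comp a b) i = deg a i + deg b i.
Proof. by case: HL => _ [_ [_ [_ [_ [H _]]]]] /H. Qed.

Lemma factorization (l : Mor L) (m p : 'I_n -> nat) :
  (forall i, deg l i = m i + p i) ->
  exists mu nu, s mu = r nu /\ l = comp mu nu /\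
    (forall i, deg mu i = m i) /\ (forall i, deg nu i = p i).
Proof. by case: HL => _ [_ [_ [_ [_ [_ H]]]]] /H []. Qed.

Lemma factorization_uniq (l mu nu mu' nu' : Mor L) :
  s mu = r nu -> l = comp mu nu -> s mu' = r nu' -> l = comp mu' nu' ->
  (forall i, deg mu i = deg mu' i) -> (forall i, deg nu i = deg nu' i) ->
  mu = mu' /\ nu = nu'.
Proof.
move=> Hs E Hs' E' Hmu Hnu.
have Hdeg : forall i, deg l i = deg mu i + deg nu i by move=> i; rewrite E deg_comp.
case: HL => _ [_ [_ [_ [_ [_ H]]]]].
by apply: (proj2 (H l _ _ Hdeg)) Hs E _ _ Hs' E' _ _.
Qed.

Lemma s_deg0 (nu : Mor L) : (forall i, deg nu i = 0) -> s nu = r nu.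
Proof.
move=> Hnu.
have [E _] : nu = idm (r nu) /\ idm (s nu) = nu.
  apply: (@factorization_uniq nu); rewrite ?r_idm ?s_idm ?idm_comp ?comp_idm //.
    by move=> i; rewrite Hnu deg_idm.
  by move=> i; rewrite Hnu deg_idm.
by rewrite {1}E s_idm.
Qed.

Definition has_edge (v : Obj L) (i : 'I_n) : Prop :=
  exists f : Mor L, r f = v /\ deg_is_unit f i.

Lemma peel_edge (l : Mor L) (i : 'I_n) : 0 < deg l i ->
  exists f nu, s f = r nu /\ l = comp f nu /\ deg_is_unit f i /\
    forall j, deg nu j = deg l j - (j == i).
Proof.
move=> Hi.
have /factorization [f [nu [Hs [E [Hf Hnu]]]]] :
    forall j, deg l j = (j == i) + (deg l j - (j == i)).
  by move=> j; case: eqP => [->|]; lia.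
by exists f, nu.
Qed.

Lemma has_edge_r_of_deg (l : Mor L) i : 0 < deg l i -> has_edge (r l) i.
Proof.
move=> /peel_edge [f [nu [Hs [E [Hf _]]]]].
by exists f; rewrite E r_comp.
Qed.

Lemma comp_prefix (mu ga al be : Mor L) :
  s mu = r ga -> s al = r be -> comp mu ga = comp al be ->
  (forall i, deg al i <= deg mu i) ->
  exists xi, s al = r xi /\ mu = comp al xi.
Proof.
move=> Hmu Hal E Hle.
have /factorization [al' [xi [Hs [Emu [Hal' Hxi]]]]] :
    forall i, deg mu i = deg al i + (deg mu i - deg al i).
  by move=> i; have := Hle i; lia.
have Hxi_ga : s xi = r ga by rewrite -Hmu Emu s_comp.
have [<- _] : al' = al /\ comp xi ga = be.
  apply: (@factorization_uniq (comp mu ga)) => //.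
  - by rewrite r_comp.
  - by rewrite Emu compA.
  - move=> i; have := congr1 (deg^~ i) E.
    rewrite !deg_comp // Emu deg_comp // Hal' Hxi; lia.
by exists xi.
Qed.

Hypothesis HLc : locally_convex L.

Lemma has_edge_transport (j i : 'I_n) (nu : Mor L) : i != j ->
  (forall l, l != j -> deg nu l = 0) -> has_edge (r nu) i -> has_edge (s nu) i.
Proof.
rewrite eq_sym => Hji; move Hp : (deg nu j) => p.
elim: p nu Hp => [|p IH] nu Hp Hnu.
  by rewrite s_deg0 // => l; case: (eqVneq l j) => [->|/Hnu].
have /peel_edge [f [nu1 [Hs [E [Hf Hnu1]]]]] : 0 < deg nu j by rewrite Hp.
rewrite E r_comp // s_comp // => /(HLc Hji Hf); rewrite Hs.
apply: IH => [|l Hl]; first by rewrite Hnu1 Hp eqxx subn1.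
by rewrite Hnu1 Hnu // (negbTE Hl).
Qed.

Variables (j : 'I_n) (lam : Mor L) (N : nat).

Definition split_extension (tau mu nu : Mor L) : Prop :=
  s lam = r tau /\ s mu = r nu /\ comp lam tau = comp mu nu /\
  deg mu j = 0 /\ forall i, i != j -> deg nu i = 0.

Definition saturated (mu : Mor L) : Prop :=
  forall i, i != j -> N <= deg mu i \/ ~ has_edge (s mu) i.

Lemma split_extension_idm : exists mu nu, split_extension (idm (s lam)) mu nu.
Proof.
have /factorization [mu [nu [Hs [E [Hmu Hnu]]]]] : forall i,
    deg lam i = (if i == j then 0 else deg lam i) + (if i == j then deg lam i else 0).
  by move=> i; case: ifP; rewrite ?addn0.
exists mu, nu; rewrite /split_extension r_idm comp_idm -E Hmu eqxx.
repeat split => //.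
by move=> i /negbTE Hi; rewrite Hnu Hi.
Qed.

Lemma split_extension_r (tau mu nu : Mor L) :
  split_extension tau mu nu -> r mu = r lam.
Proof. by move=> [Htau [Hmu [E _]]]; rewrite -(r_comp Hmu) -E r_comp. Qed.

Lemma split_extension_edge (tau mu nu : Mor L) (i : 'I_n) :
  split_extension tau mu nu -> i != j -> has_edge (s mu) i ->
  exists tau' ga nu', split_extension tau' (comp mu ga) nu' /\
    s mu = r ga /\ deg_is_unit ga i.
Proof.
move=> [Htau [Hmu [E [Hmuj Hnu]]]] Hij Hedge.
have [e [/esym Hnue Heu]] : has_edge (s nu) i.
  by rewrite Hmu in Hedge; apply: has_edge_transport Hij Hnu Hedge.
have /peel_edge [ga [nu' [Hs [E' [Hga Hnu']]]]] : 0 < deg (comp nu e) i.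
  by rewrite deg_comp // Heu eqxx addn1.
have Hmuga : s mu = r ga by rewrite Hmu -(r_comp Hnue) E' r_comp.
have Htaue : s tau = r e by rewrite -(s_comp Htau) E s_comp.
exists (comp tau e), ga, nu'; do !split => //.
- by rewrite r_comp.
- by rewrite s_comp.
- by rewrite -compA // E compA // E' compA.
- by rewrite deg_comp // Hmuj Hga eq_sym (negbTE Hij).
- by move=> l Hl; rewrite Hnu' deg_comp // Heu Hnu //; lia.
Qed.

Lemma saturate (tau mu nu : Mor L) : split_extension tau mu nu ->
  exists tau' mu' nu', split_extension tau' mu' nu' /\ saturated mu'.
Proof.
have [b] := ubnP (\sum_l (N - deg mu l)).
elim: b tau mu nu => // b IH tau mu nu Hb Hsplit.
case: (classic (exists i, [/\ i != j, deg mu i < N & has_edge (s mu) i])).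
  move=> [i [Hij Hlt Hedge]].
  have [tau' [ga [nu' [Hsplit' [Hmuga Hga]]]]] := split_extension_edge Hsplit Hij Hedge.
  rewrite ltnS in Hb; apply: IH Hsplit'; apply: leq_trans Hb.
  by apply: (@ltn_sum_subn_incr _ _ _ i) => // l; rewrite deg_comp // Hga.
move=> Hno; exists tau, mu, nu; split=> // i Hij.
case: (leqP N (deg mu i)) => HN; [left | right] => // Hedge.
by apply: Hno; exists i.
Qed.

Lemma exists_saturated_extension :
  exists tau mu nu, split_extension tau mu nu /\ saturated mu.
Proof. by have [mu [nu /saturate]] := split_extension_idm. Qed.

Lemma saturated_prefix_le (mu ga al be : Mor L) :
  saturated mu -> deg al j = 0 -> (forall i, deg al i <= N) ->
  s mu = r ga -> s al = r be -> comp mu ga = comp al be ->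
  forall i, deg al i <= deg mu i.
Proof.
move=> Hsat Halj HalN Hmu Hal E i.
case: (eqVneq i j) => [->|Hij]; first by rewrite Halj.
case: (Hsat i Hij) => [/(leq_trans (HalN i)) //|Hno].
have Hga : deg ga i = 0.
  by case: (posnP (deg ga i)) => // /has_edge_r_of_deg; rewrite -Hmu => /Hno.
have := congr1 (deg^~ i) E; rewrite !deg_comp // Hga; lia.
Qed.

End KGraph.

Section ZappaSzep.
Variables (n : nat) (L : kgraph n) (G : groupoid (Obj L)) (A : @ss_action n L G).
Hypotheses (HL : is_kgraph L) (HG : is_groupoid G) (HA : is_self_similar A).

Lemma zs_extend (lam tau : Mor L) (g : GMor G) : s lam = gr g -> s lam = r tau ->
  exists c, zs_mor (@in_Lambda n L) c /\ zs_r c = gs g /\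
    zs_mul A (lam, g) c = (comp lam tau, gid (s tau)).
Proof.
move=> Hg Htau.
have [_ [_ [_ [_ Hginv]]]] := HG.
have [Har [Haid [Hamul [_ [Hres _]]]]] := HA.
have [Hrgi [Hsgi [Hggi _]]] := Hginv g.
pose lam' := act A (ginv g) tau.
have Hsgi_tau : gs (ginv g) = r tau by rewrite Hsgi -Hg.
have Hrlam' : r lam' = gs g by rewrite Har.
have Hact : act A g lam' = tau.
  by rewrite -Hamul ?Hrgi // Hggi -Hg Htau Haid.
pose y := res A g lam'.
have [Hry Hsy] := Hres g lam' (esym Hrlam').
have [Hryi [_ [Hyyi _]]] := Hginv y.
exists (lam', ginv y); do !split => //=.
- by rewrite Hryi Hsy.
- by rewrite /zs_mul /= Hact Hyyi Hry Hact.
Qed.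

Lemma zs_common_extension (lam tau al sig : Mor L) (g h : GMor G) :
  s lam = gr g -> s al = gr h -> s lam = r tau -> s al = r sig ->
  comp lam tau = comp al sig ->
  exists c a, zs_mor (@in_Lambda n L) c /\ zs_mor (@in_Lambda n L) a /\
    zs_s (lam, g) = zs_r c /\ zs_s (al, h) = zs_r a /\
    zs_mul A (lam, g) c = zs_mul A (al, h) a.
Proof.
move=> Hg Hh Htau Hsig E.
have [c [Hc [Hrc Ec]]] := zs_extend Hg Htau.
have [a [Ha [Hra Ea]]] := zs_extend Hh Hsig.
exists c, a; do !split => //.
by rewrite Ec Ea E -(s_comp HL Htau) E s_comp.
Qed.

End ZappaSzep.

Theorem lemma3p18 (k : nat) (L : kgraph k.+1) (G : groupoid (Obj L))
    (A : @ss_action k.+1 L G)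
    (HL : is_kgraph L) (HLc : locally_convex L)
    (HG : is_groupoid G) (HA : is_self_similar A)
    (v : Obj L) (F : seq (Mor L * GMor G)) :
  exhaustive A (@in_Gamma k L) v F -> exhaustive A (@in_Lambda k.+1 L) v F.
Proof.
move=> [HF HexG]; split=> [a /HF [[]] // | [lam g] [_ Hg] Hr].
have [Hgid _] := HG; have [Har [Haid _]] := HA.
have [N HN] := deg_bounded_seq F.
have [tau [mu [nu [Hsplit Hsat]]]] := exists_saturated_extension HL HLc ord_max lam N.
have [Htau [Hmu [E [Hmuj _]]]] := Hsplit.
have Hc : zs_mor (@in_Gamma k L) (mu, @gid _ G (s mu)).
  by split=> //=; rewrite (proj1 (Hgid _)).
have [[al h] [HaF [[ga g1] [[be h1] [_ [_ [Hmuga [Hhbe Eprod]]]]]]]] :=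
  HexG _ Hc (etrans (split_extension_r HL Hsplit) Hr).
have [[Halj Hh] _] := HF _ HaF.
rewrite /zs_s /zs_r /= (proj2 (Hgid _)) in Hmuga Hhbe.
have Hal : s al = r (act A h be) by rewrite Har.
have E' : comp mu ga = comp al (act A h be).
  by have := congr1 fst Eprod; rewrite /zs_mul /= Hmuga Haid.
have [xi [Hxi Emu]] := comp_prefix HL Hmuga Hal E'
  (saturated_prefix_le HL Hsat Halj (HN _ HaF) Hmuga Hal E').
have Hxinu : s xi = r nu by rewrite -Hmu Emu s_comp.
exists (al, h); split=> //.
apply: (zs_common_extension HL HG HA (sig := comp xi nu) Hg Hh Htau) => /=.
- by rewrite r_comp.
- by rewrite E Emu compA.
Qed.
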